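(* Let $N\ge3$, $\gamma\in(0,1)$, assume $\chi$ satisfies (C1),(C2), and assume that for some $C_v>0$ the solution satisfies $v(r,t)\le C_v r^{2-N}$ for all $r\in(0,R)$, $t\in(0,T_{\max})$. Then there is $C>0$, depending only on $R,\chi_0,a,N,k,C_v$, such that for all $t\in(0,T_{\max})$ and $s_0\in(0,R^N)$, $$I_2(s_0,t)\ge C\int_0^{s_0}s^{-\gamma+(1-\frac2N)k}(s_0-s)w(s,t)w_s(s,t)\,ds .$$
   Context: Let $N\ge3$, $R>0$, $\Omega=B_R(0)\subset\mathbb{R}^N$, $m\ge1$, $\chi:(0,\infty)\to\mathbb{R}$. System (KS): $u_t=\Delta(u+1)^m-\nabla\cdot(u\chi(v)\nabla v)$, $0=\Delta v-v+u$ in $\Omega\times(0,\infty)$, $\partial_\nu u=\partial_\nu v=0$ on $\partial\Omega$, $u(\cdot,0)=u_0$, with $u_0\in C^0(\overline\Omega)\setminus\{0\}$ radially symmetric, nonnegative, $M_0=\int_\Omega u_0$. $\eta:=M_0\int_0^\infty(4\pi t)^{-N/2}e^{-(t+\frac{(2R)^2}{4t})}dt$. (C1): $\chi(s)\ge\chi_0(a+s)^{-k}$ for all $s>0$, with $\chi_0>0,a\ge0,k>0$. (C2): $\chi\in C^1((0,\infty))\cap L^\infty(\eta,\infty)$. $(u,v)$ denotes the maximal radial nonnegative classical solution on $[0,T_{\max})$; $u(r,t),v(r,t)$ with $r=|x|$. Define $w(s,t):=\int_0^{s^{1/N}}\rho^{N-1}u(\rho,t)d\rho$, $z(s,t):=\int_0^{s^{1/N}}\rho^{N-1}v(\rho,t)d\rho$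 for $s\in[0,R^N]$, and $I_2(s_0,t):=N\int_0^{s_0}s^{-\gamma}(s_0-s)\chi(Nz_s(s,t))w(s,t)w_s(s,t)\,ds$. *)

From Stdlib Require Import Reals Lra.
From Coquelicot Require Import Coquelicot.
Open Scope R_scope.

Definition rootN (N : nat) (s : R) : R :=
  if Rle_dec s 0 then 0 else Rpower s (/ INR N).

(* Volume of the unit ball of R^n: V_0 = 1, V_1 = 2, V_n = 2 pi / n * V_(n-2). *)
Fixpoint ball_vol (n : nat) : R :=
  match n with
  | O => 1
  | S O => 2
  | S (S p as q) => 2 * PI / INR (S q) * ball_vol p
  end.

(* M_0 = int_Omega u_0 for a radial u_0 with profile u0 : [0,R] -> R
   (|S^{N-1}| = N * |B_1|). *)
Definition mass0 (N : nat) (R0 : R) (u0 : R -> R) : R :=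
  INR N * ball_vol N * RInt (fun r => r ^ (N - 1) * u0 r) 0 R0.

Definition eta (N : nat) (R0 : R) (u0 : R -> R) : R :=
  mass0 N R0 u0 *
  RInt_gen (fun t => Rpower (4 * PI * t) (- (INR N) / 2)
                     * exp (- (t + (2 * R0) ^ 2 / (4 * t))))
           (at_right 0) (Rbar_locally p_infty).

(* Radial divergence of a radial vector field with radial component F:
   r^{1-N} (r^{N-1} F)_r = F' + (N-1)/r F. *)
Definition divr (N : nat) (F : R -> R) (r : R) : R :=
  Derive F r + (INR N - 1) / r * F r.

Definition cont2_on (D : R -> R -> Prop) (f : R -> R -> R) : Prop :=
  forall r t, D r t -> forall eps, 0 < eps -> exists delta, 0 < delta /\
    forall r' t', D r' t' -> Rabs (r' - r) < delta -> Rabs (t' - t) < delta ->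
      Rabs (f r' t' - f r t) < eps.

Definition ur (u : R -> R -> R) (r t : R) : R := Derive (fun x => u x t) r.
Definition urr (u : R -> R -> R) (r t : R) : R := Derive (fun x => ur u x t) r.
Definition ut (u : R -> R -> R) (r t : R) : R := Derive (fun s => u r s) t.

Definition condC1 (chi : R -> R) (chi0 a k : R) : Prop :=
  forall s, 0 < s -> chi s >= chi0 * Rpower (a + s) (- k).

(* (C2): chi in C^1((0,oo)) and chi in L^oo(eta,oo) (chi is continuous there,
   so the essential sup is the sup). *)
Definition condC2 (chi : R -> R) (eta0 : R) : Prop :=
  (forall s, 0 < s -> ex_derive chi s /\ continuous (Derive chi) s) /\
  (exists M, forall s, eta0 < s -> Rabs (chi s) <= M).

Definition admissible_u0 (R0 : R) (u0 : R -> R) : Prop :=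
  (forall r, 0 <= r <= R0 -> continuity_pt u0 r /\ 0 <= u0 r) /\
  (exists r, 0 <= r <= R0 /\ u0 r <> 0).

(* (u,v) (radial profiles u(r,t), v(r,t)) is the maximal radial nonnegative
   classical solution of (KS) on [0,Tmax), written in radial coordinates. *)
Definition max_radial_classical_solution (N : nat) (R0 m : R) (chi : R -> R)
  (u0 : R -> R) (u v : R -> R -> R) (Tmax : Rbar) : Prop :=
  Rbar_lt 0 Tmax /\
  (* continuity: u in C^0(closure Omega x [0,T)), v in C^0(closure Omega x (0,T)) *)
  cont2_on (fun r t => 0 <= r <= R0 /\ 0 <= t /\ Rbar_lt t Tmax) u /\
  cont2_on (fun r t => 0 <= r <= R0 /\ 0 < t /\ Rbar_lt t Tmax) v /\
  (* C^{2,1} / C^{2,0} regularity in the interior *)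
  (forall r t, 0 < r < R0 -> 0 < t -> Rbar_lt t Tmax ->
     ex_derive (fun x => u x t) r /\ ex_derive (fun x => ur u x t) r /\
     ex_derive (fun s => u r s) t /\
     ex_derive (fun x => v x t) r /\ ex_derive (fun x => ur v x t) r) /\
  cont2_on (fun r t => 0 < r < R0 /\ 0 < t /\ Rbar_lt t Tmax) (ur u) /\
  cont2_on (fun r t => 0 < r < R0 /\ 0 < t /\ Rbar_lt t Tmax) (urr u) /\
  cont2_on (fun r t => 0 < r < R0 /\ 0 < t /\ Rbar_lt t Tmax) (ut u) /\
  cont2_on (fun r t => 0 < r < R0 /\ 0 < t /\ Rbar_lt t Tmax) (ur v) /\
  cont2_on (fun r t => 0 < r < R0 /\ 0 < t /\ Rbar_lt t Tmax) (urr v) /\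
  (* nonnegativity (v > 0, as chi is only defined on (0,oo)) *)
  (forall r t, 0 <= r <= R0 -> 0 <= t -> Rbar_lt t Tmax -> 0 <= u r t) /\
  (forall r t, 0 <= r <= R0 -> 0 < t -> Rbar_lt t Tmax -> 0 < v r t) /\
  (forall r t, 0 < r < R0 -> 0 < t -> Rbar_lt t Tmax ->
     ut u r t =
       divr N (fun x => Derive (fun y => Rpower (u y t + 1) m) x) r
       - divr N (fun x => u x t * chi (v x t) * ur v x t) r) /\
  (forall r t, 0 < r < R0 -> 0 < t -> Rbar_lt t Tmax ->
     0 = divr N (fun x => ur v x t) r - v r t + u r t) /\
  (forall t, 0 < t -> Rbar_lt t Tmax ->
     filterlim (fun r => ur u r t) (at_left R0) (locally 0) /\
     filterlim (fun r => ur v r t) (at_left R0) (locally 0)) /\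
  (forall r, 0 <= r <= R0 -> u r 0 = u0 r) /\
  (* maximality: blow-up alternative *)
  (forall T, Tmax = Finite T ->
     forall M, exists r t, 0 <= r <= R0 /\ 0 <= t < T /\ u r t > M).

Definition wfun (N : nat) (u : R -> R -> R) (s t : R) : R :=
  RInt (fun rho => rho ^ (N - 1) * u rho t) 0 (rootN N s).

Definition ws (N : nat) (u : R -> R -> R) (s t : R) : R :=
  Derive (fun x => wfun N u x t) s.

Definition I2 (N : nat) (gamma : R) (chi : R -> R) (u v : R -> R -> R)
  (s0 t : R) : R :=
  INR N * RInt (fun s => Rpower s (- gamma) * (s0 - s)
                         * chi (INR N * ws N v s t) * wfun N u s t * ws N u s t)
               0 s0.

From Pilot Require Import Defs.
From Stdlib Require Import Reals Lra Lia.
From Coquelicot Require Import Coquelicot.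
Open Scope R_scope.

(* Fix a time t and write phi = u(., t), psi = v(., t).  In the mass coordinate
   s = r^N one has N z_s(s) = psi(s^(1/N)) and w_s(s) = phi(s^(1/N)) / N >= 0,
   w >= 0.  By (C1) and v <= Cv r^(2-N),
     chi(N z_s(s)) >= chi0 (a + Cv r^(2-N))^(-k) >= chi0 K0^(-k) s^((1 - 2/N) k)
   with K0 = a R0^(N-2) + Cv (using r^(2-N) >= R0^(2-N)); multiplying by the
   nonnegative weight s^(-gamma) (s0 - s) w w_s and integrating gives the claim
   with C = N chi0 K0^(-k). *)

Lemma continuous_eps_delta (f : R -> R) (x : R) :
  continuous f x <->
  (forall eps, 0 < eps -> exists delta, 0 < delta /\
     forall y, Rabs (y - x) < delta -> Rabs (f y - f x) < eps).
Proof.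
  split.
  - intros Hf eps Heps.
    destruct (proj1 (filterlim_locally f (f x)) Hf (mkposreal eps Heps)) as [delta Hdelta].
    exists delta; split; [apply cond_pos |]. intros y Hy. exact (Hdelta y Hy).
  - intros H. apply filterlim_locally. intros [eps Heps].
    destruct (H eps Heps) as [delta [Hdelta Hy]].
    exists (mkposreal delta Hdelta). intros y Hyx. exact (Hy y Hyx).
Qed.

Lemma continuous_Rmult (f g : R -> R) (x : R) :
  continuous f x -> continuous g x -> continuous (fun y => f y * g y) x.
Proof. apply (continuous_mult f g x). Qed.

Definition continuous_on_segment (R0 : R) (phi : R -> R) : Prop :=
  forall r, 0 <= r <= R0 -> forall eps, 0 < eps -> exists delta, 0 < delta /\
    forall r', 0 <= r' <= R0 -> Rabs (r' - r) < delta -> Rabs (phi r' - phi r) < eps.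

Lemma continuous_on_segment_comp (R0 : R) (phi g : R -> R) :
  continuous_on_segment R0 phi ->
  (forall r, 0 <= r <= R0 -> continuous g (phi r)) ->
  continuous_on_segment R0 (fun r => g (phi r)).
Proof.
  intros Hphi Hg r Hr eps Heps.
  destruct (proj1 (continuous_eps_delta g (phi r)) (Hg r Hr) eps Heps) as [d1 [Hd1 H1]].
  destruct (Hphi r Hr d1 Hd1) as [d2 [Hd2 H2]].
  exists d2; split; auto.
Qed.

(* The nearest-point projection of R onto [0, R0].  Precomposing with it extends
   a function continuous on the segment to a function continuous on all of R. *)
Definition clamp (R0 r : R) : R := Rmax 0 (Rmin R0 r).

Lemma clamp_in (R0 r : R) : 0 <= R0 -> 0 <= clamp R0 r <= R0.
Proof. intros; unfold clamp, Rmax, Rmin; repeat destruct Rle_dec; lra. Qed.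

Lemma clamp_id (R0 r : R) : 0 <= r <= R0 -> clamp R0 r = r.
Proof. intros; unfold clamp, Rmax, Rmin; repeat destruct Rle_dec; lra. Qed.

Lemma clamp_1_lipschitz (R0 r r' : R) :
  0 <= R0 -> Rabs (clamp R0 r' - clamp R0 r) <= Rabs (r' - r).
Proof.
  intros; unfold clamp, Rmax, Rmin; repeat destruct Rle_dec;
    unfold Rabs; repeat destruct Rcase_abs; lra.
Qed.

Lemma continuous_clamp_extension (R0 : R) (phi : R -> R) (x : R) :
  0 <= R0 -> continuous_on_segment R0 phi -> continuous (fun r => phi (clamp R0 r)) x.
Proof.
  intros HR0 Hphi. apply continuous_eps_delta. intros eps Heps.
  destruct (Hphi (clamp R0 x) (clamp_in R0 x HR0) eps Heps) as [d [Hd Hy]].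
  exists d; split; auto. intros y Hyx. apply Hy; [apply clamp_in; auto |].
  eapply Rle_lt_trans; [apply clamp_1_lipschitz; auto | exact Hyx].
Qed.

Lemma continuous_on_segment_bounded (R0 : R) (phi : R -> R) :
  0 < R0 -> continuous_on_segment R0 phi ->
  exists M, forall r, 0 <= r <= R0 -> Rabs (phi r) <= M.
Proof.
  intros HR0 Hphi.
  destruct (continuity_ab_maj (fun r => Rabs (phi (clamp R0 r))) 0 R0) as [x [Hx _]].
  - lra.
  - intros c _. apply continuity_pt_filterlim.
    apply (continuous_Rabs_comp (fun r => phi (clamp R0 r))).
    apply continuous_clamp_extension; auto; lra.
  - exists (Rabs (phi (clamp R0 x))). intros r Hr.
    specialize (Hx r Hr). rewrite clamp_id in Hx; auto.
Qed.

Lemma locally_interval (a b s : R) : a < s < b -> locally s (fun x => a < x < b).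
Proof. apply (open_and (fun x => a < x) (fun x => x < b)); [apply open_gt | apply open_lt]. Qed.

Lemma Rpower_gt0 (x e : R) : 0 < Rpower x e.
Proof. apply exp_pos. Qed.

Lemma continuous_Rpower (x e : R) : 0 < x -> continuous (fun y => Rpower y e) x.
Proof.
  intros Hx. apply (@ex_derive_continuous R_AbsRing R_NormedModule).
  eexists. apply is_derive_Reals, derivable_pt_lim_power; auto.
Qed.

Lemma rootN_nonpos (N : nat) (s : R) : s <= 0 -> rootN N s = 0.
Proof. intros; unfold rootN; destruct Rle_dec; lra. Qed.

Lemma rootN_pos (N : nat) (s : R) : 0 < s -> rootN N s = Rpower s (/ INR N).
Proof. intros; unfold rootN; destruct Rle_dec; lra. Qed.

Lemma rootN_gt0 (N : nat) (s : R) : 0 < s -> 0 < rootN N s.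
Proof. intros; rewrite rootN_pos; auto; apply Rpower_gt0. Qed.

Lemma rootN_pow (N : nat) (s : R) : (1 <= N)%nat -> 0 < s -> rootN N s ^ N = s.
Proof.
  intros HN Hs. rewrite rootN_pos, <- Rpower_pow, Rpower_mult, Rinv_l by
    (auto; try apply Rpower_gt0; apply not_0_INR; lia).
  apply Rpower_1; auto.
Qed.

Lemma rootN_in (N : nat) (R0 s : R) :
  (1 <= N)%nat -> 0 < R0 -> s < R0 ^ N -> 0 <= rootN N s < R0.
Proof.
  intros HN HR0 Hs. destruct (Rle_or_lt s 0) as [Hs0 | Hs0].
  - rewrite rootN_nonpos; auto; lra.
  - split; [left; apply rootN_gt0; auto |].
    destruct (Rlt_or_le (rootN N s) R0) as [H | H]; auto.
    assert (R0 ^ N <= rootN N s ^ N) by (apply pow_incr; lra).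
    rewrite rootN_pow in *; auto; lra.
Qed.

Lemma rootN_derive (N : nat) (s : R) : (1 <= N)%nat -> 0 < s ->
  is_derive (rootN N) s (/ INR N * Rpower s (/ INR N - 1)).
Proof.
  intros HN Hs.
  apply is_derive_ext_loc with (f := fun x => Rpower x (/ INR N)).
  - apply (filter_imp (fun x => 0 < x < s + 1)); [| apply locally_interval; lra].
    intros y Hy. rewrite rootN_pos; auto; lra.
  - apply is_derive_Reals, derivable_pt_lim_power; auto.
Qed.

Lemma continuous_rootN (N : nat) (s : R) : (1 <= N)%nat -> 0 < s -> continuous (rootN N) s.
Proof.
  intros; apply (@ex_derive_continuous R_AbsRing R_NormedModule).
  eexists; apply rootN_derive; auto.
Qed.

(* The mass coordinate of a radial profile phi on B_R0 in R^N:
   s |-> int_0^{s^(1/N)} rho^(N-1) phi(rho) d rho.  For phi = u(., t) this is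
   the function w(., t) of the paper (Defs.wfun). *)
Definition mass_coord (N : nat) (phi : R -> R) (s : R) : R :=
  RInt (fun r => r ^ (N - 1) * phi r) 0 (rootN N s).

Lemma mass_coord_nonpos (N : nat) (phi : R -> R) (s : R) :
  s <= 0 -> mass_coord N phi s = 0.
Proof.
  intros; unfold mass_coord; rewrite rootN_nonpos; auto.
  apply (@RInt_point R_CompleteNormedModule).
Qed.

Lemma pow_pred_mul (N : nat) (x : R) : (1 <= N)%nat -> x * x ^ (N - 1) = x ^ N.
Proof. intros; rewrite tech_pow_Rmult; f_equal; lia. Qed.

Section MassCoordinate.

Variables (N : nat) (R0 : R) (phi : R -> R).
Hypothesis HN : (1 <= N)%nat.
Hypothesis HR0 : 0 < R0.
Hypothesis Hphi : continuous_on_segment R0 phi.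

Let mass_integrand (r : R) : R := r ^ (N - 1) * phi (clamp R0 r).
Let radial_mass (x : R) : R := RInt mass_integrand 0 x.

Lemma continuous_mass_integrand (x : R) : continuous mass_integrand x.
Proof.
  apply (continuous_Rmult (fun r => r ^ (N - 1)) (fun r => phi (clamp R0 r))).
  - apply (@ex_derive_continuous R_AbsRing R_NormedModule); auto_derive; auto.
  - apply continuous_clamp_extension; auto; lra.
Qed.

Lemma ex_RInt_mass_integrand (a b : R) : ex_RInt mass_integrand a b.
Proof.
  apply (@ex_RInt_continuous R_CompleteNormedModule); intros; apply continuous_mass_integrand.
Qed.

Lemma radial_mass_derive (x : R) : is_derive radial_mass x (mass_integrand x).
Proof.
  apply (is_derive_RInt mass_integrand radial_mass 0); [| apply continuous_mass_integrand].
  apply filter_forall; intros y.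
  apply (@RInt_correct R_CompleteNormedModule), ex_RInt_mass_integrand.
Qed.

Lemma mass_coord_radial (s : R) : s < R0 ^ N -> mass_coord N phi s = radial_mass (rootN N s).
Proof.
  intros Hs. destruct (rootN_in N R0 s HN HR0 Hs) as [Hr0 Hr1].
  apply RInt_ext. intros y Hy. rewrite Rmin_left, Rmax_right in Hy by lra.
  unfold mass_integrand; rewrite clamp_id; auto; lra.
Qed.

Lemma mass_coord_radial_loc (s : R) : 0 < s < R0 ^ N ->
  locally s (fun x => radial_mass (rootN N x) = mass_coord N phi x).
Proof.
  intros Hs. apply (filter_imp (fun x => 0 < x < R0 ^ N)); [| apply locally_interval; auto].
  intros x Hx; symmetry; apply mass_coord_radial; lra.
Qed.

Lemma mass_coord_derive (s : R) : 0 < s < R0 ^ N ->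
  is_derive (mass_coord N phi) s (phi (rootN N s) / INR N).
Proof.
  intros Hs. destruct (rootN_in N R0 s HN HR0 (proj2 Hs)) as [_ Hr1].
  assert (Hr := rootN_gt0 N s (proj1 Hs)).
  apply is_derive_ext_loc with (f := fun x => radial_mass (rootN N x));
    [apply mass_coord_radial_loc; auto |].
  replace (phi (rootN N s) / INR N) with
    (scal (/ INR N * Rpower s (/ INR N - 1)) (mass_integrand (rootN N s))).
  - apply (is_derive_comp radial_mass (rootN N));
      [apply radial_mass_derive | apply rootN_derive; [exact HN | lra]].
  - assert (Hpow := pow_pred_mul N (rootN N s) HN).
    rewrite rootN_pow in Hpow by (auto; lra).
    assert (rootN N s ^ (N - 1) <> 0) by (apply pow_nonzero; lra).
    assert (INR N <> 0) by (apply not_0_INR; lia).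
    unfold scal, mass_integrand; simpl; unfold mult; simpl.
    unfold Rminus; rewrite Rpower_plus, Rpower_Ropp, Rpower_1, <- rootN_pos by lra.
    rewrite clamp_id by lra. set (r := rootN N s) in *. rewrite <- Hpow. field. lra.
Qed.

Lemma Derive_mass_coord (s : R) : 0 < s < R0 ^ N ->
  Derive (mass_coord N phi) s = phi (rootN N s) / INR N.
Proof. intros; apply is_derive_unique, mass_coord_derive; auto. Qed.

Lemma continuous_mass_coord (s : R) : 0 < s < R0 ^ N -> continuous (mass_coord N phi) s.
Proof.
  intros Hs. apply (continuous_ext_loc _ (fun x => radial_mass (rootN N x)));
    [apply mass_coord_radial_loc; auto |].
  apply (continuous_comp (rootN N) radial_mass); [apply continuous_rootN; auto; lra |].
  apply (@ex_derive_continuous R_AbsRing R_NormedModule).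
  eexists; apply radial_mass_derive.
Qed.

Lemma continuous_Derive_mass_coord (s : R) : 0 < s < R0 ^ N ->
  continuous (Derive (mass_coord N phi)) s.
Proof.
  intros Hs. apply (continuous_ext_loc _ (fun x => phi (clamp R0 (rootN N x)) / INR N)).
  - apply (filter_imp (fun x => 0 < x < R0 ^ N)); [| apply locally_interval; auto].
    intros x Hx. rewrite Derive_mass_coord, clamp_id; auto.
    destruct (rootN_in N R0 x HN HR0 (proj2 Hx)); lra.
  - apply (continuous_Rmult (fun x => phi (clamp R0 (rootN N x))) (fun _ => / INR N));
      [| apply continuous_const].
    apply (continuous_comp (rootN N) (fun y => phi (clamp R0 y)));
      [apply continuous_rootN; auto; lra |].
    apply continuous_clamp_extension; auto; lra.
Qed.

Lemma mass_coord_bound (M s : R) : (forall r, 0 <= r <= R0 -> Rabs (phi r) <= M) ->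
  0 < s < R0 ^ N -> Rabs (mass_coord N phi s) <= M * s.
Proof.
  intros HM Hs. destruct (rootN_in N R0 s HN HR0 (proj2 Hs)) as [Hr0 Hr1].
  rewrite mass_coord_radial by lra.
  eapply Rle_trans.
  - apply (abs_RInt_le_const mass_integrand 0 (rootN N s) (rootN N s ^ (N - 1) * M));
      [lra | apply ex_RInt_mass_integrand |].
    intros r Hr. unfold mass_integrand. rewrite Rabs_mult.
    apply Rmult_le_compat; try apply Rabs_pos.
    + rewrite Rabs_pos_eq by (apply pow_le; lra). apply pow_incr; lra.
    + apply HM, clamp_in; lra.
  - assert (Hpow := pow_pred_mul N (rootN N s) HN).
    rewrite rootN_pow in Hpow by (auto; lra).
    set (r := rootN N s) in *. rewrite <- Hpow. right; ring.
Qed.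

Lemma Derive_mass_coord_bound (M s : R) : (forall r, 0 <= r <= R0 -> Rabs (phi r) <= M) ->
  0 < s < R0 ^ N -> Rabs (Derive (mass_coord N phi) s) <= M.
Proof.
  intros HM Hs. destruct (rootN_in N R0 s HN HR0 (proj2 Hs)).
  assert (HNr : 1 <= INR N) by (apply (le_INR 1); auto).
  rewrite Derive_mass_coord by auto. unfold Rdiv.
  rewrite Rabs_mult, (Rabs_pos_eq (/ INR N)) by (left; apply Rinv_0_lt_compat; lra).
  assert (HM' := HM (rootN N s) ltac:(lra)).
  assert (/ INR N <= 1) by (rewrite <- Rinv_1; apply Rinv_le_contravar; lra).
  assert (0 < / INR N) by (apply Rinv_0_lt_compat; lra).
  assert (0 <= Rabs (phi (rootN N s))) by apply Rabs_pos. nra.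
Qed.

Lemma mass_coord_nonneg (s : R) : (forall r, 0 <= r <= R0 -> 0 <= phi r) ->
  s < R0 ^ N -> 0 <= mass_coord N phi s.
Proof.
  intros Hnn Hs. destruct (rootN_in N R0 s HN HR0 Hs).
  rewrite mass_coord_radial by lra.
  apply RInt_ge_0; [lra | apply ex_RInt_mass_integrand |]. intros x Hx.
  apply Rmult_le_pos; [apply pow_le; lra | apply Hnn, clamp_in; lra].
Qed.

Lemma Derive_mass_coord_nonneg (s : R) : (forall r, 0 <= r <= R0 -> 0 <= phi r) ->
  0 < s < R0 ^ N -> 0 <= Derive (mass_coord N phi) s.
Proof.
  intros Hnn Hs. destruct (rootN_in N R0 s HN HR0 (proj2 Hs)).
  rewrite Derive_mass_coord by auto.
  apply Rdiv_le_0_compat; [apply Hnn; lra | apply lt_0_INR; lia].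
Qed.

End MassCoordinate.

Lemma continuous_at0_of_power_bound (F : R -> R) (e K d : R) :
  0 < e -> 0 <= K -> 0 < d ->
  (forall s, s <= 0 -> F s = 0) ->
  (forall s, 0 < s < d -> Rabs (F s) <= K * Rpower s e) -> continuous F 0.
Proof.
  intros He HK Hd Hzero Hbound. apply continuous_eps_delta. intros eps Heps.
  set (c := eps / (K + 1)).
  assert (Hc : 0 < c) by (unfold c; apply Rdiv_lt_0_compat; lra).
  assert (Hroot := Rpower_gt0 c (/ e)).
  exists (Rmin d (Rpower c (/ e))). split; [apply Rmin_glb_lt; auto |].
  intros y Hy. rewrite (Hzero 0), Rminus_0_r in * by lra.
  destruct (Rle_or_lt y 0) as [Hy0 | Hy0]; [rewrite Hzero, Rabs_R0; auto |].
  rewrite Rabs_pos_eq in Hy by lra.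
  assert (Hm1 := Rmin_l d (Rpower c (/ e))). assert (Hm2 := Rmin_r d (Rpower c (/ e))).
  assert (Hsmall : Rpower y e < c).
  { replace c with (Rpower (Rpower c (/ e)) e)
      by (rewrite Rpower_mult, Rinv_l, Rpower_1; auto; lra).
    apply Rlt_Rpower_l; auto; lra. }
  assert (Hpy := Rpower_gt0 y e).
  apply Rle_lt_trans with (K * Rpower y e); [apply Hbound; lra |].
  replace eps with ((K + 1) * c) by (unfold c; field; lra). nra.
Qed.

(* Integrability of the weighted integrands s^e (s0 - s) h(s) w(s) w'(s) on
   [0, s0]: near 0 the weight s^e may blow up (e > -1), but w = O(s) absorbs it,
   so the integrand extends continuously by 0 at s = 0. *)
Lemma ex_RInt_weighted (e s0 Mh Mw : R) (h w dw : R -> R) :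
  -1 < e -> 0 < s0 ->
  (forall s, s <= 0 -> w s = 0) ->
  (forall s, 0 < s <= s0 -> continuous h s /\ continuous w s /\ continuous dw s) ->
  (forall s, 0 < s <= s0 -> Rabs (h s) <= Mh /\ Rabs (w s) <= Mw * s /\ Rabs (dw s) <= Mw) ->
  ex_RInt (fun s => Rpower s e * (s0 - s) * h s * w s * dw s) 0 s0.
Proof.
  intros He Hs0 Hw0 Hcont Hbound.
  destruct (Hbound s0 ltac:(lra)) as [Hh0 [_ Hdw0]].
  assert (HMh : 0 <= Mh) by (eapply Rle_trans; [apply Rabs_pos | exact Hh0]).
  assert (HMw : 0 <= Mw) by (eapply Rle_trans; [apply Rabs_pos | exact Hdw0]).
  apply (@ex_RInt_continuous R_CompleteNormedModule). intros z Hz.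
  rewrite Rmin_left, Rmax_right in Hz by lra.
  destruct (Req_dec z 0) as [-> | Hz0].
  - apply (continuous_at0_of_power_bound _ (e + 1) (s0 * Mh * Mw * Mw) s0); try lra.
    + repeat apply Rmult_le_pos; lra.
    + intros s Hs. rewrite Hw0; auto; ring.
    + intros s Hs. destruct (Hbound s ltac:(lra)) as [Hh [Hw Hdw]].
      rewrite Rpower_plus, Rpower_1 by lra. rewrite !Rabs_mult.
      rewrite (Rabs_pos_eq (Rpower s e)) by (left; apply Rpower_gt0).
      rewrite (Rabs_pos_eq (s0 - s)) by lra.
      assert (Hpe := Rpower_gt0 s e).
      apply Rle_trans with (Rpower s e * s0 * Mh * (Mw * s) * Mw); [| right; ring].
      repeat apply Rmult_le_compat; try apply Rabs_pos;
        repeat apply Rmult_le_pos; try apply Rabs_pos; lra.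
  - destruct (Hcont z ltac:(lra)) as [Hh [Hw Hdw]].
    repeat apply continuous_Rmult; auto.
    + apply continuous_Rpower; lra.
    + apply (continuous_minus (fun _ => s0) (fun s => s));
        [apply continuous_const | apply continuous_id].
Qed.

(* The pointwise bound v(r) <= Cv r^(2-N) on (0, R0) gives
   a + v(r) <= (a R0^(N-2) + Cv) r^(2-N), using r^(2-N) >= R0^(2-N). *)
Lemma shifted_v_bound (N : nat) (R0 a Cv rho vv : R) :
  (2 <= N)%nat -> 0 <= a -> 0 < rho <= R0 -> vv <= Cv * Rpower rho (2 - INR N) ->
  a + vv <= (a * R0 ^ (N - 2) + Cv) * Rpower rho (2 - INR N).
Proof.
  intros HN Ha Hrho Hvv.
  assert (Hinv : rho ^ (N - 2) * Rpower rho (2 - INR N) = 1).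
  { rewrite <- Rpower_pow, <- Rpower_plus, minus_INR by (auto; lra).
    replace (INR N - INR 2 + (2 - INR N)) with 0 by (simpl; ring).
    apply Rpower_O; lra. }
  assert (rho ^ (N - 2) <= R0 ^ (N - 2)) by (apply pow_incr; lra).
  assert (Hq := Rpower_gt0 rho (2 - INR N)).
  assert (1 <= R0 ^ (N - 2) * Rpower rho (2 - INR N)) by nra.
  nra.
Qed.

Lemma chi_lower_bound (N : nat) (R0 chi0 a k Cv : R) (chi : R -> R) (rho vv : R) :
  (2 <= N)%nat -> 0 <= chi0 -> 0 <= a -> 0 <= k -> 0 < Cv ->
  condC1 chi chi0 a k -> 0 < rho <= R0 -> 0 < vv -> vv <= Cv * Rpower rho (2 - INR N) ->
  chi0 * Rpower (a * R0 ^ (N - 2) + Cv) (- k) * Rpower (rho ^ N) ((1 - 2 / INR N) * k)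
    <= chi vv.
Proof.
  intros HN Hchi0 Ha Hk HCv HC1 Hrho Hvv Hvb.
  set (K0 := a * R0 ^ (N - 2) + Cv).
  set (q := Rpower rho (2 - INR N)).
  assert (HK0 : 0 < K0).
  { assert (0 <= a * R0 ^ (N - 2)) by (apply Rmult_le_pos; auto; apply pow_le; lra).
    unfold K0; lra. }
  assert (Hq : 0 < q) by apply Rpower_gt0.
  assert (Hpow : Rpower (a + vv) k <= Rpower (K0 * q) k)
    by (apply Rle_Rpower_l; auto; split; [lra | apply shifted_v_bound; auto]).
  assert (Hexp : Rpower (rho ^ N) ((1 - 2 / INR N) * k) = Rpower q (- k)).
  { assert (INR N <> 0) by (apply not_0_INR; lia).
    unfold q. rewrite <- Rpower_pow, !Rpower_mult by lra. f_equal. field; auto. }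
  eapply Rle_trans; [| apply Rge_le, HC1; auto].
  rewrite Hexp, Rmult_assoc, Rpower_mult_distr, (Rpower_Ropp (a + vv)), Rpower_Ropp
    by auto.
  apply Rmult_le_compat_l; auto.
  apply Rinv_le_contravar; auto; apply Rpower_gt0.
Qed.

Section TimeSlice.

Variables (N : nat) (R0 : R) (chi phi psi : R -> R).
Hypothesis HN : (1 <= N)%nat.
Hypothesis HR0 : 0 < R0.
Hypothesis Hphi : continuous_on_segment R0 phi.
Hypothesis Hpsi : continuous_on_segment R0 psi.
Hypothesis Hphi_nonneg : forall r, 0 <= r <= R0 -> 0 <= phi r.
Hypothesis Hpsi_pos : forall r, 0 <= r <= R0 -> 0 < psi r.
Hypothesis Hchi : forall y, 0 < y -> continuous chi y.

Let w : R -> R := mass_coord N phi.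
Let z : R -> R := mass_coord N psi.

(* N z_s(s) = psi(s^(1/N)): the argument of chi in I_2 is v itself. *)
Lemma scaled_Derive_z (s : R) : 0 < s < R0 ^ N -> INR N * Derive z s = psi (rootN N s).
Proof.
  intros Hs. unfold z. rewrite (Derive_mass_coord N R0) by auto.
  field. apply not_0_INR; lia.
Qed.

Lemma w_integrability_data :
  exists Mw, forall s, 0 < s < R0 ^ N ->
    (continuous w s /\ continuous (Derive w) s) /\
    (Rabs (w s) <= Mw * s /\ Rabs (Derive w s) <= Mw).
Proof.
  destruct (continuous_on_segment_bounded R0 phi HR0 Hphi) as [Mw HMw].
  exists Mw. intros s Hs. unfold w. split; split.
  - apply continuous_mass_coord with R0; auto.
  - apply continuous_Derive_mass_coord with R0; auto.
  - apply mass_coord_bound with R0; auto.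
  - apply Derive_mass_coord_bound with R0; auto.
Qed.

(* The integrand of I_2 is Riemann integrable on [0, s0]; chi(N z_s) stays
   bounded because v > 0 is continuous on [0, R0]. *)
Lemma ex_RInt_I2_integrand (gamma s0 : R) : gamma < 1 -> 0 < s0 < R0 ^ N ->
  ex_RInt (fun s => Rpower s (- gamma) * (s0 - s) * chi (INR N * Derive z s)
                    * w s * Derive w s) 0 s0.
Proof.
  intros Hgamma Hs0.
  destruct w_integrability_data as [Mw HMw].
  assert (Hchipsi : continuous_on_segment R0 (fun r => chi (psi r)))
    by (apply continuous_on_segment_comp; auto).
  destruct (continuous_on_segment_bounded R0 _ HR0 Hchipsi) as [Mc HMc].
  apply (ex_RInt_weighted _ _ Mc Mw); try lra.
  - intros s Hs; apply mass_coord_nonpos; auto.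
  - intros s Hs. assert (Hs' : 0 < s < R0 ^ N) by lra.
    split; [| apply HMw; auto].
    apply (continuous_ext_loc _ (fun x => chi (psi (clamp R0 (rootN N x))))).
    + apply (filter_imp (fun x => 0 < x < R0 ^ N)); [| apply locally_interval; auto].
      intros x Hx. rewrite scaled_Derive_z, clamp_id; auto.
      destruct (rootN_in N R0 x HN HR0 (proj2 Hx)); lra.
    + apply (continuous_comp (rootN N) (fun y => chi (psi (clamp R0 y))));
        [apply continuous_rootN; auto; lra |].
      apply (continuous_clamp_extension R0 (fun r => chi (psi r))); auto; lra.
  - intros s Hs. assert (Hs' : 0 < s < R0 ^ N) by lra.
    split; [| apply HMw; auto].
    rewrite scaled_Derive_z by auto. destruct (rootN_in N R0 s HN HR0 (proj2 Hs')).
    apply HMc; lra.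
Qed.

Lemma ex_RInt_comparison_integrand (e s0 : R) : -1 < e -> 0 < s0 < R0 ^ N ->
  ex_RInt (fun s => Rpower s e * (s0 - s) * w s * Derive w s) 0 s0.
Proof.
  intros He Hs0.
  destruct w_integrability_data as [Mw HMw].
  apply (ex_RInt_ext (fun s => Rpower s e * (s0 - s) * 1 * w s * Derive w s));
    [intros; simpl; ring |].
  apply (ex_RInt_weighted _ _ 1 Mw); try lra.
  - intros s Hs; apply mass_coord_nonpos; auto.
  - intros s Hs. split; [apply continuous_const | apply HMw; lra].
  - intros s Hs. split; [rewrite Rabs_R1; lra | apply HMw; lra].
Qed.

(* The comparison behind Lemma 3.3: a lower bound chi(psi(r)) >= c (r^N)^beta
   passes to the integrals, because s^(-gamma) (s0 - s) w w_s >= 0. *)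
Lemma I2_integral_lower_bound (gamma beta c s0 : R) :
  0 < gamma < 1 -> 0 <= beta -> 0 < s0 < R0 ^ N ->
  (forall r, 0 < r < R0 -> c * Rpower (r ^ N) beta <= chi (psi r)) ->
  c * RInt (fun s => Rpower s (- gamma + beta) * (s0 - s) * w s * Derive w s) 0 s0
  <= RInt (fun s => Rpower s (- gamma) * (s0 - s) * chi (INR N * Derive z s)
                    * w s * Derive w s) 0 s0.
Proof.
  intros Hgamma Hbeta Hs0 Hchi_lower.
  rewrite <- (RInt_scal (V := R_CompleteNormedModule))
    by (apply ex_RInt_comparison_integrand; lra).
  apply RInt_le; [lra | | apply ex_RInt_I2_integrand; lra |].
  - apply (ex_RInt_scal (V := R_CompleteNormedModule)), ex_RInt_comparison_integrand; lra.
  - intros s Hs. assert (Hs' : 0 < s < R0 ^ N) by lra.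
    destruct (rootN_in N R0 s HN HR0 (proj2 Hs')).
    assert (Hr := rootN_gt0 N s (proj1 Hs)).
    assert (Hchi_s := Hchi_lower (rootN N s) ltac:(lra)).
    rewrite rootN_pow in Hchi_s by (auto; lra).
    assert (Hweight : 0 <= Rpower s (- gamma) * (s0 - s) * w s * Derive w s).
    { assert (Hpg := Rpower_gt0 s (- gamma)).
      assert (0 <= w s) by (apply mass_coord_nonneg with R0; auto; lra).
      assert (0 <= Derive w s) by (apply Derive_mass_coord_nonneg with R0; auto).
      repeat apply Rmult_le_pos; lra. }
    unfold scal; simpl; unfold mult; simpl.
    rewrite scaled_Derive_z, Rpower_plus by auto.
    apply Rle_trans with ((Rpower s (- gamma) * (s0 - s) * w s * Derive w s)
                          * (c * Rpower s beta)); [right; ring |].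
    apply Rle_trans with ((Rpower s (- gamma) * (s0 - s) * w s * Derive w s)
                          * chi (psi (rootN N s))); [apply Rmult_le_compat_l; auto |].
    right; ring.
Qed.

End TimeSlice.

Lemma cont2_on_slice (R0 : R) (P : R -> Prop) (f : R -> R -> R) (t : R) :
  cont2_on (fun r t => 0 <= r <= R0 /\ P t) f -> P t ->
  continuous_on_segment R0 (fun r => f r t).
Proof.
  intros Hf Ht r Hr eps Heps.
  destruct (Hf r t (conj Hr Ht) eps Heps) as [delta [Hdelta Hclose]].
  exists delta; split; auto. intros r' Hr' Hrr'.
  apply Hclose; auto. rewrite Rminus_diag, Rabs_R0; auto.
Qed.

Theorem lemma3p3 :
  forall (N : nat) (R0 chi0 a k Cv : R),
    (3 <= N)%nat -> 0 < R0 -> 0 < chi0 -> 0 <= a -> 0 < k -> 0 < Cv ->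
    exists C : R, 0 < C /\
      forall (m gamma : R) (chi : R -> R) (u0 : R -> R) (u v : R -> R -> R)
             (Tmax : Rbar),
        1 <= m -> 0 < gamma < 1 ->
        condC1 chi chi0 a k -> condC2 chi (eta N R0 u0) ->
        admissible_u0 R0 u0 ->
        max_radial_classical_solution N R0 m chi u0 u v Tmax ->
        (forall r t, 0 < r < R0 -> 0 < t -> Rbar_lt t Tmax ->
           v r t <= Cv * Rpower r (2 - INR N)) ->
        forall t s0, 0 < t -> Rbar_lt t Tmax -> 0 < s0 < R0 ^ N ->
          I2 N gamma chi u v s0 t >=
          C * RInt (fun s => Rpower s (- gamma + (1 - 2 / INR N) * k) * (s0 - s)
                             * wfun N u s t * ws N u s t) 0 s0.
Proof.
  intros N R0 chi0 a k Cv HN HR0 Hchi0 Ha Hk HCv.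
  set (c := chi0 * Rpower (a * R0 ^ (N - 2) + Cv) (- k)).
  assert (HNpos : 0 < INR N) by (apply lt_0_INR; lia).
  exists (INR N * c). split.
  { apply Rmult_lt_0_compat; [lra | apply Rmult_lt_0_compat; [lra | apply Rpower_gt0]]. }
  intros m gamma chi u0 u v Tmax _ Hgamma HC1 [HC2 _] _ Hsol Hv t s0 Ht HtT Hs0.
  destruct Hsol as [_ [Hu_cont [Hv_cont [_ [_ [_ [_ [_ [_ [Hu_nonneg [Hv_pos _]]]]]]]]]]].
  assert (Hbeta : 0 <= (1 - 2 / INR N) * k).
  { assert (3 <= INR N) by (replace 3 with (INR 3) by (simpl; ring); apply le_INR; auto).
    apply Rmult_le_pos; [| lra].
    assert (/ INR N <= / 3) by (apply Rinv_le_contravar; lra).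
    unfold Rdiv; lra. }
  assert (Hcompare := I2_integral_lower_bound N R0 chi (fun r => u r t) (fun r => v r t)
    ltac:(lia) HR0
    (cont2_on_slice R0 (fun t => 0 <= t /\ Rbar_lt t Tmax) u t Hu_cont ltac:(split; auto; lra))
    (cont2_on_slice R0 (fun t => 0 < t /\ Rbar_lt t Tmax) v t Hv_cont ltac:(split; auto))
    (fun r Hr => Hu_nonneg r t Hr ltac:(lra) HtT)
    (fun r Hr => Hv_pos r t Hr Ht HtT)
    (fun y Hy => ex_derive_continuous chi y (proj1 (HC2 y Hy)))
    gamma _ c s0 Hgamma Hbeta Hs0
    (fun r Hr => chi_lower_bound N R0 chi0 a k Cv chi r (v r t) ltac:(lia) ltac:(lra) Ha
       ltac:(lra) HCv HC1 ltac:(lra) (Hv_pos r t ltac:(lra) Ht HtT) (Hv r t Hr Ht HtT))).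
  unfold I2. apply Rle_ge. rewrite Rmult_assoc. apply Rmult_le_compat_l; [lra |].
  exact Hcompare.
Qed.
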